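(* For all integers $n\ge2$ and $k\ge1$, the number $T_{n,k}$ of triangles (subgraphs isomorphic to $K_3$) of $H_{n,k}$ is $$T_{n,k}=\frac{1}{2}(n-2)\left(1-\frac{n}{3}-(n-1)^{k+1}+\frac{2}{3}n^k(2n-3)\right).$$
   Context: Let $n\ge 2$ and $k\ge 1$ be integers. $H_{n,k}$ is the simple undirected graph with vertex set $V_{n,k}=\mathbb{Z}_n^k$ (so $|V_{n,k}|=n^k$), whose vertices are written as strings $x_1x_2\ldots x_k$ with $x_j\in\mathbb{Z}_n=\{0,1,\ldots,n-1\}$. Two distinct vertices are adjacent if and only if they are related by one of the following rules. For $i=0$ the prefix $x_1\ldots x_i$ is empty, and ''$0\ldots0$'' denotes a string of zeros completing the word to length $k$. (R1) $x_1\ldots x_{k-1}x_k\sim x_1\ldots x_{k-1}y_k$ whenever $y_k\neq x_k$. (R2) For $0\le i\le k-2$: $x_1\ldots x_i0\ldots0\sim x_1\ldots x_ix_{i+1}\ldots x_k$ whenever $x_j\neq 0$ for all $i+1\le j\le k$. (R3) For $1\le i\le k-1$: $x_1\ldots x_{i-1}x_i0\ldots0\sim x_1\ldots x_{i-1}y_i0\ldots0$ whenever $x_i,y_i\neq0$ and $x_i\ne y_i$. In particular, $H_{n,1}$ is the complete graph $K_n$. *)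

From HB Require Import structures.
From mathcomp Require Import all_boot all_order all_algebra.
Set Implicit Arguments. Unset Strict Implicit. Unset Printing Implicit Defensive.

(* Vertices of H_{n,k}: words x_1 ... x_k over Z_n, encoded as finite
   functions 'I_k -> 'I_n; position j (1-based) of the paper is index j-1
   here.  Only the distinguished letter 0 matters, so 'I_n suffices. *)
Definition vert (n k : nat) := {ffun 'I_k -> 'I_n}.

Definition rule1 (n k : nat) (x y : vert n k) : bool :=
  [forall j : 'I_k, (j.+1 < k) ==> (x j == y j)] &&
  [exists j : 'I_k, (j.+1 == k) && (x j != y j)].

(* (R2), with 0-based prefix length i, 0 <= i <= k-2:
   x = x_1..x_i 0..0 and y = x_1..x_i y_{i+1}..y_k with all y_j <> 0, j > i. *)
Definition rule2 (n k : nat) (x y : vert n k) : bool :=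
  [exists i : 'I_k, (i.+2 <= k) &&
    [forall j : 'I_k,
      if j < i then x j == y j
      else (nat_of_ord (x j) == 0) && (nat_of_ord (y j) != 0)]].

(* (R3), with 1-based index i, 1 <= i <= k-1, i.e. 0-based p = i-1 <= k-2:
   x = x_1..x_{i-1} x_i 0..0 and y = x_1..x_{i-1} y_i 0..0,
   x_i, y_i nonzero and distinct. *)
Definition rule3 (n k : nat) (x y : vert n k) : bool :=
  [exists p : 'I_k, (p.+2 <= k) &&
    [&& nat_of_ord (x p) != 0, nat_of_ord (y p) != 0, x p != y p &
    [forall j : 'I_k,
      if j < p then x j == y j
      else (p < j) ==> (nat_of_ord (x j) == 0) && (nat_of_ord (y j) == 0)]]].

Definition Hadj (n k : nat) (x y : vert n k) : bool :=
  (x != y) &&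
  [|| rule1 x y, rule1 y x, rule2 x y, rule2 y x, rule3 x y | rule3 y x].

Definition triangles (n k : nat) : {set {set vert n k}} :=
  [set S : {set vert n k} | (#|S| == 3) &&
     [forall x in S, forall y in S, (x != y) ==> Hadj x y]].

Definition T_count (n k : nat) : nat := #|triangles n k|.

(* Deleting the first letter splits H_{n,k+1} into n copies a.H_{n,k}, one for
   each letter a.  The only other edges join the zero word 0.0...0 to every word
   b.v all of whose letters are nonzero (rule R2 with i = 0), and join the words
   a.0...0 with a <> 0 pairwise (rule R3 with i = 1).  So a triangle of H_{n,k+1}
   either lies in one copy, or is an edge between two all-nonzero words of a copy
   a <> 0 together with the zero word, or consists of three words a.0...0 with
   distinct nonzero a.  If E_k counts the edges between all-nonzero words of
   H_{n,k}, then E_{k+1} = (n-1) E_k, and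
   T_{n,k+1} = n T_{n,k} + (n-1) E_k + C(n-1,3);
   the formula follows by induction from T_{n,1} = C(n,3), E_1 = C(n-1,2).
   All counting is done on ordered triangles, six per triangle. *)

From HB Require Import structures.
From mathcomp Require Import all_boot all_order all_algebra.
From mathcomp Require Import ring.
Set Implicit Arguments. Unset Strict Implicit. Unset Printing Implicit Defensive.

Lemma sum_andb_l (I : finType) (P : bool) (F : I -> bool) :
  \sum_i (P && F i : nat) = P * \sum_i (F i : nat).
Proof. by case: P; rewrite ?mul1n ?mul0n // big1. Qed.

Lemma sum_eq_nat (I : finType) (b : I) : \sum_c (b == c : nat) = 1.
Proof. by rewrite (bigD1 b) //= eqxx big1 // => c; rewrite eq_sym => /negbTE ->. Qed.

Section OrderedTriangles.
Variable T : finType.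
Implicit Types (A : rel T) (S : {set T}).

Lemma sum_neq S x : x \in S -> \sum_(y in S) (x != y : nat) = #|S|.-1.
Proof.
move=> xS; rewrite (big_setD1 x xS) eqxx /= add0n (cardsD1 x S) xS add1n /=.
by rewrite -sum1_card; apply: eq_bigr => y; rewrite !inE eq_sym => /andP[->].
Qed.

Lemma card_distinct_pairs S :
  \sum_(x in S) \sum_(y in S) (x != y : nat) = #|S| * #|S|.-1.
Proof. by rewrite -sum_nat_const; apply: eq_bigr => x; apply: sum_neq. Qed.

Lemma card_distinct_triples S :
  \sum_(x in S) \sum_(y in S) \sum_(z in S) ([&& x != y, y != z & x != z] : nat)
  = #|S| * #|S|.-1 * #|S|.-2.
Proof.
rewrite -mulnA -sum_nat_const; apply: eq_bigr => x xS.
rewrite -{1}(sum_neq xS) big_distrl /=; apply: eq_bigr => y yS.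
have [<-|xy] := eqVneq x y; first by rewrite mul0n big1.
have yS' : y \in S :\ x by rewrite !inE eq_sym xy.
rewrite mul1n (big_setD1 x xS) eqxx andbF /= add0n.
rewrite (cardsD1 x S) xS add1n /= -(sum_neq yS').
by apply: eq_bigr => z; rewrite !inE eq_sym => /andP[->]; rewrite andbT.
Qed.

Lemma sum_mkcond2 S (P : T -> T -> bool) :
  \sum_x \sum_y ((x \in S) && (y \in S) && P x y : nat) =
  \sum_(x in S) \sum_(y in S) (P x y : nat).
Proof.
rewrite [RHS]big_mkcond; apply: eq_bigr => x _; case: (x \in S) => /=; last by rewrite big1.
by rewrite [RHS]big_mkcond; apply: eq_bigr => y _; case: (y \in S).
Qed.

Lemma sum_mkcond3 S (P : T -> T -> T -> bool) :
  \sum_x \sum_y \sum_z ([&& x \in S, y \in S & z \in S] && P x y z : nat) =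
  \sum_(x in S) \sum_(y in S) \sum_(z in S) (P x y z : nat).
Proof.
rewrite [RHS]big_mkcond; apply: eq_bigr => x _.
case: (x \in S) => /=; last by rewrite big1 // => y _; rewrite big1.
by rewrite -sum_mkcond2.
Qed.

Definition tri3 A x y z := [&& A x y, A y z & A x z].

Definition ordered_triangles A := \sum_x \sum_y \sum_z (tri3 A x y z : nat).

Definition triangle_sets A : {set {set T}} :=
  [set S : {set T} | (#|S| == 3) &&
     [forall x in S, forall y in S, (x != y) ==> A x y]].

Lemma card_set3 (x y z : T) :
  x != y -> y != z -> x != z -> #|[set x; y; z]| = 3.
Proof.
by move=> xy yz xz; rewrite -setUA !cardsU1 cards1 !inE negb_or xy xz yz.
Qed.

Section IrreflexiveSymmetric.
Variable A : rel T.
Hypotheses (Airr : irreflexive A) (Asym : symmetric A).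

Lemma rel_neq x y : A x y -> x != y.
Proof. by apply: contraTneq => ->; rewrite Airr. Qed.

Lemma tri3C12 x y z : tri3 A x y z = tri3 A y x z.
Proof. by rewrite /tri3 Asym (Asym y z); case: (A x y) (A z y) (A x z) => [] [] []. Qed.

Lemma tri3C23 x y z : tri3 A x y z = tri3 A x z y.
Proof. by rewrite /tri3 (Asym y z); case: (A x y) (A z y) (A x z) => [] [] []. Qed.

Lemma triangle_setsP S :
  reflect (#|S| = 3 /\ {in S &, forall x y, x != y -> A x y}) (S \in triangle_sets A).
Proof.
rewrite inE; apply: (iffP andP) => [[/eqP cS /forall_inP FS] | [-> FS]].
  by split=> // x y xS yS; move/forall_inP: (FS x xS) => /(_ y yS) /implyP.
by split=> //; apply/forall_inP => x xS; apply/forall_inP => y yS; apply/implyP; apply: FS.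
Qed.

Lemma tri3_in_triangle S x y z : S \in triangle_sets A ->
  (S == [set x; y; z]) && tri3 A x y z =
  [&& x \in S, y \in S & z \in S] && [&& x != y, y != z & x != z].
Proof.
move=> /triangle_setsP[cS FS]; apply/idP/idP.
  case/andP => /eqP -> /and3P[Axy Ayz Axz].
  by rewrite !inE !eqxx !orbT /= !rel_neq.
case/andP=> /and3P[xS yS zS] /and3P[xy yz xz].
have -> : S = [set x; y; z].
  apply/eqP; rewrite eq_sym eqEcard card_set3 // cS leqnn andbT.
  by apply/subsetP => u; rewrite !inE => /orP[/orP[]|] /eqP ->.
by rewrite eqxx /tri3 !FS // !inE eqxx ?orbT.
Qed.

Lemma tri3_triangle_sets x y z : tri3 A x y z ->
  [set x; y; z] \in triangle_sets A.
Proof.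
case/and3P=> Axy Ayz Axz; apply/triangle_setsP; split; first by rewrite card_set3 ?rel_neq.
move=> u v; rewrite !inE => /orP[/orP[]|] /eqP-> /orP[/orP[]|] /eqP->; rewrite ?eqxx // => _;
  by rewrite // Asym.
Qed.

Lemma ordered_trianglesE : ordered_triangles A = 6 * #|triangle_sets A|.
Proof.
have split3 x y z : (tri3 A x y z : nat) =
    \sum_(S in triangle_sets A) ((S == [set x; y; z]) && tri3 A x y z : nat).
  have [t|_] := boolP (tri3 A x y z); last by rewrite big1 // => S; rewrite andbF.
  rewrite (bigD1 _ (tri3_triangle_sets t)) /= eqxx big1 // => S /andP[_].
  by move/negbTE->.
rewrite /ordered_triangles mulnC -sum_nat_const.
under eq_bigr do under eq_bigr do under eq_bigr do rewrite split3.
under eq_bigr do under eq_bigr do rewrite exchange_big.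
under eq_bigr do rewrite exchange_big.
rewrite exchange_big; apply: eq_bigr => S tS.
have /triangle_setsP[cS _] := tS.
have -> : 6 = #|S| * #|S|.-1 * #|S|.-2 by rewrite cS.
under eq_bigr do under eq_bigr do under eq_bigr do rewrite (tri3_in_triangle _ _ _ tS).
by rewrite -card_distinct_triples -sum_mkcond3.
Qed.

End IrreflexiveSymmetric.
End OrderedTriangles.

Lemma forall_ord_recl k (P : pred 'I_k.+1) :
  [forall j, P j] = P ord0 && [forall j : 'I_k, P (lift ord0 j)].
Proof.
apply/forallP/andP => [H | [H0 /forallP H] j]; first by split => //; apply/forallP.
by case: (unliftP ord0 j) => [j' -> | ->].
Qed.

Lemma exists_ord_recl k (P : pred 'I_k.+1) :
  [exists j, P j] = P ord0 || [exists j : 'I_k, P (lift ord0 j)].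
Proof.
apply/existsP/orP => [[j] | [H0 | /existsP [j Hj]]].
- by case: (unliftP ord0 j) => [j' -> H | -> ->]; [right; apply/existsP; exists j' | left].
- by exists ord0.
- by exists (lift ord0 j).
Qed.

Definition wcons n k (a : 'I_n) (u : vert n k) : vert n k.+1 :=
  [ffun j => if unlift ord0 j is Some j' then u j' else a].

Lemma wcons0 n k a (u : vert n k) : wcons a u ord0 = a.
Proof. by rewrite ffunE unlift_none. Qed.

Lemma wconsS n k a (u : vert n k) j : wcons a u (lift ord0 j) = u j.
Proof. by rewrite ffunE liftK. Qed.

Lemma wcons_eq n k a b (u v : vert n k) :
  (wcons a u == wcons b v) = (a == b) && (u == v).
Proof.
apply/eqP/andP => [E | [/eqP -> /eqP -> //]].
split; first by rewrite -(wcons0 a u) -(wcons0 b v) E.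
by apply/eqP/ffunP => j; rewrite -(wconsS a u) -(wconsS b v) E.
Qed.

Lemma big_wcons (R : Type) (idx : R) (op : Monoid.com_law idx) n k
    (F : vert n k.+1 -> R) :
  \big[op/idx]_x F x = \big[op/idx]_a \big[op/idx]_u F (wcons a u).
Proof.
rewrite pair_big (reindex (fun p : 'I_n * vert n k => wcons p.1 p.2)) //=.
exists (fun x : vert n k.+1 => (x ord0, [ffun j => x (lift ord0 j)])).
  by move=> [a u] _ /=; rewrite wcons0; congr pair; apply/ffunP => j; rewrite ffunE wconsS.
move=> x _; apply/ffunP => j; rewrite ffunE.
by case: (unliftP ord0 j) => [j' -> | ->]; rewrite ?liftK ?unlift_none // ffunE.
Qed.

Lemma big_vert1 (R : Type) (idx : R) (op : Monoid.com_law idx) n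
    (F : vert n 1 -> R) :
  \big[op/idx]_x F x = \big[op/idx]_(a : 'I_n) F [ffun=> a].
Proof.
rewrite (reindex (fun a : 'I_n => [ffun=> a])) //.
exists (fun x : vert n 1 => x ord0) => [a _ | x _]; first by rewrite ffunE.
by apply/ffunP => j; rewrite ffunE (ord1 j).
Qed.

Definition zero_word n k (u : vert n k) := [forall j, nat_of_ord (u j) == 0].
Definition nonzero_word n k (u : vert n k) := [forall j, nat_of_ord (u j) != 0].

Lemma nonzero_word_wcons n k a (u : vert n k) :
  nonzero_word (wcons a u) = (nat_of_ord a != 0) && nonzero_word u.
Proof.
rewrite /nonzero_word forall_ord_recl wcons0; congr (_ && _).
by apply/forallP/forallP => H j; move: (H j); rewrite wconsS.
Qed.

Lemma zero_word_nonzero n k (u : vert n k.+1) : zero_word u -> nonzero_word u = false.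
Proof.
by move=> /forallP /(_ ord0) u0; apply/negbTE/negP => /forallP /(_ ord0); rewrite u0.
Qed.

Lemma zero_word_inj n k (u v : vert n k) : zero_word u -> zero_word v -> u = v.
Proof.
move=> /forallP Hu /forallP Hv; apply/ffunP => j; apply: ord_inj.
by rewrite (eqP (Hu j)) (eqP (Hv j)).
Qed.

Lemma rule1_wcons n k a b (u v : vert n k.+1) :
  rule1 (wcons a u) (wcons b v) = (a == b) && rule1 u v.
Proof.
rewrite /rule1 forall_ord_recl exists_ord_recl !wcons0.
under eq_forallb do rewrite !wconsS lift0 ltnS.
under eq_existsb do rewrite !wconsS lift0 eqSS.
by rewrite /= andbA.
Qed.

Lemma rule2_wcons n k a b (u v : vert n k.+1) :
  rule2 (wcons a u) (wcons b v) =
  [&& nat_of_ord a == 0, nat_of_ord b != 0, zero_word u & nonzero_word v]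
  || (a == b) && rule2 u v.
Proof.
rewrite /rule2 exists_ord_recl forall_ord_recl /= !wcons0.
under eq_forallb do rewrite !wconsS /=.
under eq_existsb => i do rewrite forall_ord_recl /= !wcons0 ltnS /=.
under eq_existsb => i do under eq_forallb => j do rewrite !wconsS /= ltnS.
rewrite -!andbA; congr (_ || _).
  congr (_ && (_ && _)); apply/forallP/andP => [H | [/forallP H1 /forallP H2] x].
    by split; apply/forallP => x; case/andP: (H x).
  by rewrite H1 H2.
by case: (a == b) => //=; apply/existsP => [][x]; rewrite andbF.
Qed.

Lemma rule3_wcons n k a b (u v : vert n k.+1) :
  rule3 (wcons a u) (wcons b v) =
  [&& nat_of_ord a != 0, nat_of_ord b != 0, a != b, zero_word u & zero_word v]
  || (a == b) && rule3 u v.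
Proof.
rewrite /rule3 exists_ord_recl forall_ord_recl /= !wcons0.
under eq_forallb do rewrite !wconsS /=.
under eq_existsb => i do rewrite forall_ord_recl /= !wcons0 !wconsS /= ltnS /=.
under eq_existsb => i do under eq_forallb => j do rewrite !wconsS /= !ltnS.
congr (_ || _).
  congr (_ && (_ && (_ && _))); apply/forallP/andP => [H | [/forallP H1 /forallP H2] x].
    by split; apply/forallP => x; case/andP: (H x).
  by rewrite H1 H2.
by case: (a == b) => //=; apply/existsP => [][x]; rewrite !andbF.
Qed.

(* The edges between the copies a.H_{n,k} and b.H_{n,k} of H_{n,k+1}, a <> b. *)
Definition cross_adj n k (a b : 'I_n) (u v : vert n k) :=
  [|| [&& nat_of_ord a == 0, nat_of_ord b != 0, zero_word u & nonzero_word v],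
      [&& nat_of_ord b == 0, nat_of_ord a != 0, zero_word v & nonzero_word u]
    | [&& nat_of_ord a != 0, nat_of_ord b != 0, zero_word u & zero_word v]].

Lemma Hadj_wcons n k a b (u v : vert n k.+1) :
  Hadj (wcons a u) (wcons b v) = if a == b then Hadj u v else cross_adj a b u v.
Proof.
rewrite /Hadj !rule1_wcons !rule2_wcons !rule3_wcons wcons_eq.
have [<- | ab] := eqVneq a b.
  by rewrite /=; case: (nat_of_ord a == 0); rewrite /= ?orbF.
rewrite /= !orbF /cross_adj.
by case: (nat_of_ord a == 0); case: (nat_of_ord b == 0); case: (zero_word u);
  case: (zero_word v); case: (nonzero_word u); case: (nonzero_word v);
  rewrite //= ?andbF ?orbF.
Qed.

Lemma Hadj_irr n k : irreflexive (@Hadj n k).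
Proof. by move=> x; rewrite /Hadj eqxx. Qed.

Lemma Hadj_sym n k : symmetric (@Hadj n k).
Proof.
move=> x y; rewrite /Hadj eq_sym; congr (_ && _).
by case: (rule1 x y); case: (rule1 y x); case: (rule2 x y); case: (rule2 y x);
  case: (rule3 x y); case: (rule3 y x).
Qed.

Lemma Hadj_ord1 n (x y : vert n 1) : Hadj x y = (x ord0 != y ord0).
Proof.
have xy : (x == y) = (x ord0 == y ord0).
  by apply/eqP/eqP => [-> // | E]; apply/ffunP => j; rewrite (ord1 j).
have r1 (x' y' : vert n 1) : rule1 x' y' = (x' ord0 != y' ord0).
  apply/andP/idP => [[_ /existsP [j]] | x'y']; first by rewrite (ord1 j).
  split; first by apply/forallP => j; rewrite (ord1 j).
  by apply/existsP; exists ord0; rewrite x'y'.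
have r2 (x' y' : vert n 1) : rule2 x' y' = false.
  by apply/existsP => [][i]; rewrite (ord1 i).
have r3 (x' y' : vert n 1) : rule3 x' y' = false.
  by apply/existsP => [][i]; rewrite (ord1 i).
by rewrite /Hadj !r1 !r2 !r3 xy eq_sym; case: (y ord0 == x ord0).
Qed.

Lemma not_both_zero n (a c : 'I_n) :
  a != c -> ~~ ((nat_of_ord a == 0) && (nat_of_ord c == 0)).
Proof. by apply: contra => /andP[/eqP a0 /eqP c0]; apply/eqP/ord_inj; rewrite a0 c0. Qed.

Lemma tri3_two_copies n k (a c : 'I_n) (u v w : vert n k.+1) : a != c ->
  [&& Hadj u v, cross_adj a c v w & cross_adj a c u w] =
  [&& zero_word w, nat_of_ord c == 0, nat_of_ord a != 0, nonzero_word u,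
      nonzero_word v & Hadj u v].
Proof.
(* The case split rules out u and v being both zero words, as then u = v. *)
move=> /not_both_zero ac; rewrite /cross_adj.
case Zu: (zero_word u); case Zv: (zero_word v); case Zw: (zero_word w);
  rewrite ?(zero_word_nonzero Zu) ?(zero_word_nonzero Zv) ?(zero_word_nonzero Zw);
  try (rewrite (zero_word_inj Zu Zv) Hadj_irr ?andbF //);
  move: ac; case: (nat_of_ord a == 0); case: (nat_of_ord c == 0);
  case: (nonzero_word u); case: (nonzero_word v); case: (nonzero_word w);
  case: (Hadj u v); rewrite //= ?andbF.
Qed.

Lemma tri3_three_copies n k (a b c : 'I_n) (u v w : vert n k.+1) :
  a != b -> b != c -> a != c ->
  [&& cross_adj a b u v, cross_adj b c v w & cross_adj a c u w] =
  [&& zero_word w, zero_word v, zero_word u, nat_of_ord a != 0,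
      nat_of_ord b != 0 & nat_of_ord c != 0].
Proof.
move=> /not_both_zero ab /not_both_zero bc /not_both_zero ac; rewrite /cross_adj.
case Zu: (zero_word u); case Zv: (zero_word v); case Zw: (zero_word w);
  rewrite ?(zero_word_nonzero Zu) ?(zero_word_nonzero Zv) ?(zero_word_nonzero Zw);
  move: ab bc ac; case: (nat_of_ord a == 0); case: (nat_of_ord b == 0);
  case: (nat_of_ord c == 0); case: (nonzero_word u); case: (nonzero_word v);
  case: (nonzero_word w); rewrite //= ?andbF.
Qed.

Definition otriangles n k := ordered_triangles (@Hadj n k).

Definition nonzero_edges n k :=
  \sum_(u : vert n k) \sum_(v : vert n k)
     ([&& nonzero_word u, nonzero_word v & Hadj u v] : nat).

Definition letter_tri n k (a b c : 'I_n) :=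
  \sum_(u : vert n k.+1) \sum_(v : vert n k.+1) \sum_(w : vert n k.+1)
     (tri3 (@Hadj n k.+2) (wcons a u) (wcons b v) (wcons c w) : nat).

Lemma sum_zero_word n k (P : bool) : 0 < n ->
  \sum_(w : vert n k) (zero_word w && P : nat) = P.
Proof.
move=> n0; case: P; last by rewrite big1 // => w _; rewrite andbF.
pose z0 : vert n k := [ffun _ => Ordinal n0].
have Z0 : zero_word z0 by apply/forallP => j; rewrite ffunE.
rewrite (bigD1 z0) //= Z0 big1 // => w wz; rewrite andbT.
by case Zw: (zero_word w); rewrite // (zero_word_inj Zw Z0) eqxx in wz.
Qed.

Section LetterTriangles.
Variables (n k : nat).
Hypothesis n0 : 0 < n.
Implicit Types a b c : 'I_n.

Lemma letter_tri_same a : letter_tri k a a a = otriangles n k.+1.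
Proof.
apply: eq_bigr => u _; apply: eq_bigr => v _; apply: eq_bigr => w _.
by rewrite /tri3 !Hadj_wcons eqxx.
Qed.

Lemma letter_tri_pair a c : a != c ->
  letter_tri k a a c = ((nat_of_ord c == 0) && (nat_of_ord a != 0)) * nonzero_edges n k.+1.
Proof.
move=> ac; rewrite /letter_tri /nonzero_edges.
under eq_bigr do under eq_bigr do under eq_bigr do
  rewrite /tri3 !Hadj_wcons eqxx (negbTE ac) tri3_two_copies //.
under eq_bigr do under eq_bigr do rewrite sum_zero_word // andbA.
by under eq_bigr do rewrite sum_andb_l; rewrite -big_distrr.
Qed.

Lemma letter_tri_distinct a b c : a != b -> b != c -> a != c ->
  letter_tri k a b c = [&& nat_of_ord a != 0, nat_of_ord b != 0 & nat_of_ord c != 0].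
Proof.
move=> ab bc ac; rewrite /letter_tri.
under eq_bigr do under eq_bigr do under eq_bigr do
  rewrite /tri3 !Hadj_wcons (negbTE ab) (negbTE bc) (negbTE ac) tri3_three_copies //.
under eq_bigr do under eq_bigr do rewrite sum_zero_word //.
by under eq_bigr do rewrite sum_zero_word //; rewrite sum_zero_word.
Qed.

Lemma letter_triC12 a b c : letter_tri k a b c = letter_tri k b a c.
Proof.
rewrite /letter_tri exchange_big; apply: eq_bigr => v _; apply: eq_bigr => u _.
by apply: eq_bigr => w _; rewrite (tri3C12 (@Hadj_sym _ _)).
Qed.

Lemma letter_triC23 a b c : letter_tri k a b c = letter_tri k a c b.
Proof.
apply: eq_bigr => u _; rewrite exchange_big; apply: eq_bigr => w _.
by apply: eq_bigr => v _; rewrite (tri3C23 (@Hadj_sym _ _)).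
Qed.

Lemma letter_triE a b c : letter_tri k a b c =
  ((a == b) && (b == c)) * otriangles n k.+1
  + ((a == b) && (nat_of_ord c == 0) && (nat_of_ord a != 0)) * nonzero_edges n k.+1
  + ((a == c) && (nat_of_ord b == 0) && (nat_of_ord a != 0)) * nonzero_edges n k.+1
  + ((b == c) && (nat_of_ord a == 0) && (nat_of_ord b != 0)) * nonzero_edges n k.+1
  + [&& nat_of_ord a != 0, nat_of_ord b != 0 & nat_of_ord c != 0]
      && [&& a != b, b != c & a != c].
Proof.
have [<-|ab] := eqVneq a b; have [<-|ac] := eqVneq a c.
- by rewrite letter_tri_same /= andbN andbF !mul0n mul1n !addn0.
- by rewrite letter_tri_pair //= andbF !mul0n !addn0.
- rewrite letter_triC23 letter_tri_pair // (eq_sym b a) (negbTE ab).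
  by rewrite /= !andbF !mul0n !addn0.
have [<-|bc] := eqVneq b c.
  rewrite letter_triC12 letter_triC23 letter_tri_pair; last by rewrite eq_sym.
  by rewrite /= !andbF !mul0n !add0n addn0.
by rewrite letter_tri_distinct //= !mul0n !add0n andbT.
Qed.
End LetterTriangles.

Section LetterSums.
Variable n : nat.
Hypothesis n0 : 0 < n.
Let zero : 'I_n := Ordinal n0.

Definition nonzero_letters : {set 'I_n} := [set a | nat_of_ord a != 0].

Lemma card_nonzero_letters : #|nonzero_letters| = n.-1.
Proof.
rewrite (_ : nonzero_letters = [set~ zero]) ?cardsC1 ?card_ord //.
by apply/setP => a; rewrite !inE.
Qed.

Lemma sum_zero_letter : \sum_(a : 'I_n) (nat_of_ord a == 0 : nat) = 1.
Proof. by rewrite -(sum_eq_nat zero); apply: eq_bigr => a _; rewrite eq_sym. Qed.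

Lemma sum_nonzero_letter : \sum_(a : 'I_n) (nat_of_ord a != 0 : nat) = n.-1.
Proof.
rewrite -card_nonzero_letters -sum1_card [RHS]big_mkcond.
by apply: eq_bigr => a _; rewrite inE; case: (_ != _).
Qed.

Lemma sum_letters_eq3 :
  \sum_(a : 'I_n) \sum_(b : 'I_n) \sum_(c : 'I_n) ((a == b) && (b == c) : nat) = n.
Proof.
under eq_bigr do under eq_bigr do rewrite sum_andb_l sum_eq_nat muln1.
by under eq_bigr do rewrite sum_eq_nat; rewrite sum_nat_const card_ord muln1.
Qed.

Lemma sum_letters_pair12 : \sum_(a : 'I_n) \sum_(b : 'I_n) \sum_(c : 'I_n)
  ((a == b) && (nat_of_ord c == 0) && (nat_of_ord a != 0) : nat) = n.-1.
Proof.
under eq_bigr do under eq_bigr do under eq_bigr do rewrite andbAC.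
under eq_bigr do under eq_bigr do rewrite sum_andb_l sum_zero_letter muln1 andbC.
by under eq_bigr do rewrite sum_andb_l sum_eq_nat muln1; rewrite sum_nonzero_letter.
Qed.

Lemma sum_letters_pair13 : \sum_(a : 'I_n) \sum_(b : 'I_n) \sum_(c : 'I_n)
  ((a == c) && (nat_of_ord b == 0) && (nat_of_ord a != 0) : nat) = n.-1.
Proof.
under eq_bigr do under eq_bigr do under eq_bigr do rewrite -andbA andbC.
under eq_bigr do under eq_bigr do rewrite sum_andb_l sum_eq_nat muln1 andbC.
by under eq_bigr do rewrite sum_andb_l sum_zero_letter muln1; rewrite sum_nonzero_letter.
Qed.

Lemma sum_letters_pair23 : \sum_(a : 'I_n) \sum_(b : 'I_n) \sum_(c : 'I_n)
  ((b == c) && (nat_of_ord a == 0) && (nat_of_ord b != 0) : nat) = n.-1.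
Proof.
under eq_bigr do under eq_bigr do under eq_bigr do rewrite -andbA andbC.
under eq_bigr do under eq_bigr do rewrite sum_andb_l sum_eq_nat muln1.
under eq_bigr do rewrite sum_andb_l sum_nonzero_letter.
by rewrite -big_distrl /= sum_zero_letter mul1n.
Qed.

Lemma sum_letters_distinct_nonzero : \sum_(a : 'I_n) \sum_(b : 'I_n) \sum_(c : 'I_n)
  ([&& nat_of_ord a != 0, nat_of_ord b != 0 & nat_of_ord c != 0]
     && [&& a != b, b != c & a != c] : nat) = n.-1 * n.-2 * n.-1.-2.
Proof.
rewrite -card_nonzero_letters -card_distinct_triples -sum_mkcond3.
by apply: eq_bigr => a _; apply: eq_bigr => b _; apply: eq_bigr => c _; rewrite !inE.
Qed.

End LetterSums.

Lemma big3_distrl (I : finType) (F : I -> I -> I -> nat) e :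
  \sum_a \sum_b \sum_c (F a b c * e) = (\sum_a \sum_b \sum_c F a b c) * e.
Proof.
rewrite big_distrl; apply: eq_bigr => a _; rewrite big_distrl.
by apply: eq_bigr => b _; rewrite big_distrl.
Qed.

Section Recursion.
Variable n : nat.
Hypothesis n0 : 0 < n.

Lemma otriangles_letters k :
  otriangles n k.+2 = \sum_(a : 'I_n) \sum_(b : 'I_n) \sum_(c : 'I_n) letter_tri k a b c.
Proof.
rewrite /otriangles /ordered_triangles big_wcons.
under eq_bigr do under eq_bigr do rewrite big_wcons.
under eq_bigr do under eq_bigr do under eq_bigr do under eq_bigr do rewrite big_wcons.
under eq_bigr do rewrite exchange_big.
under eq_bigr do under eq_bigr do under eq_bigr do rewrite exchange_big.
by under eq_bigr do under eq_bigr do rewrite exchange_big.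
Qed.

Lemma otriangles_rec k : otriangles n k.+2 =
  n * otriangles n k.+1 + 3 * (n.-1 * nonzero_edges n k.+1) + n.-1 * n.-2 * n.-1.-2.
Proof.
rewrite otriangles_letters.
under eq_bigr do under eq_bigr do under eq_bigr do rewrite letter_triE //.
under eq_bigr do under eq_bigr do rewrite !big_split /=.
under eq_bigr do rewrite !big_split /=.
rewrite !big_split /= !big3_distrl sum_letters_eq3 // sum_letters_pair12 //.
rewrite sum_letters_pair13 // sum_letters_pair23 // sum_letters_distinct_nonzero //.
ring.
Qed.

Lemma nonzero_edge_wcons k a b (u v : vert n k.+1) :
  [&& nonzero_word (wcons a u), nonzero_word (wcons b v) & Hadj (wcons a u) (wcons b v)]
  = ((a == b) && (nat_of_ord a != 0)) && [&& nonzero_word u, nonzero_word v & Hadj u v].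
Proof.
rewrite !nonzero_word_wcons Hadj_wcons.
have [<- | ab] := eqVneq a b; first by case: (nat_of_ord a != 0).
case Nu: (nonzero_word u); case Nv: (nonzero_word v); rewrite ?andbF //=.
have Zu : zero_word u = false by apply/negP => /zero_word_nonzero; rewrite Nu.
have Zv : zero_word v = false by apply/negP => /zero_word_nonzero; rewrite Nv.
by rewrite /cross_adj Zu Zv !andbF.
Qed.

Lemma nonzero_edges_rec k : nonzero_edges n k.+2 = n.-1 * nonzero_edges n k.+1.
Proof.
rewrite /nonzero_edges big_wcons.
under eq_bigr do under eq_bigr do rewrite big_wcons.
under eq_bigr do rewrite exchange_big.
under eq_bigr do under eq_bigr do under eq_bigr do under eq_bigr do rewrite nonzero_edge_wcons.
under eq_bigr do under eq_bigr do under eq_bigr do rewrite sum_andb_l.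
under eq_bigr do under eq_bigr do rewrite -big_distrr /=.
rewrite -/(nonzero_edges n k.+1); under eq_bigr do rewrite -big_distrl /=.
rewrite -big_distrl /=; congr (_ * _).
under eq_bigr do under eq_bigr do rewrite andbC.
under eq_bigr do rewrite sum_andb_l sum_eq_nat muln1.
by rewrite sum_nonzero_letter.
Qed.

Lemma otriangles1 : otriangles n 1 = n * n.-1 * n.-2.
Proof.
rewrite /otriangles /ordered_triangles big_vert1.
under eq_bigr do rewrite big_vert1; under eq_bigr do under eq_bigr do rewrite big_vert1.
have := card_distinct_triples [set: 'I_n]; rewrite cardsT card_ord -sum_mkcond3 => <-.
apply: eq_bigr => a _; apply: eq_bigr => b _; apply: eq_bigr => c _.
by rewrite !in_setT /tri3 !Hadj_ord1 !ffunE.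
Qed.

Lemma nonzero_word_const (a : 'I_n) :
  nonzero_word [ffun _ : 'I_1 => a] = (nat_of_ord a != 0).
Proof. by apply/forallP/idP => [/(_ ord0) | a0 j]; rewrite ffunE. Qed.

Lemma nonzero_edges1 : nonzero_edges n 1 = n.-1 * n.-2.
Proof.
rewrite /nonzero_edges big_vert1; under eq_bigr do rewrite big_vert1.
have := card_distinct_pairs (nonzero_letters n).
rewrite (card_nonzero_letters n0) -sum_mkcond2 => <-.
apply: eq_bigr => a _; apply: eq_bigr => b _.
by rewrite !inE !nonzero_word_const Hadj_ord1 !ffunE andbA.
Qed.

Lemma nonzero_edgesE k : nonzero_edges n k.+1 = n.-1 ^ k.+1 * n.-2.
Proof.
elim: k => [|k IH]; first by rewrite nonzero_edges1 expn1.
by rewrite nonzero_edges_rec IH [in RHS]expnS mulnA.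
Qed.

End Recursion.

Import GRing.Theory Num.Theory.
Local Open Scope ring_scope.

Lemma otrianglesE n k : (1 < n)%N ->
  ((otriangles n k.+1)%:R : rat) = (n%:R - 2) *
    (3 - n%:R - 3 * (n%:R - 1) ^+ k.+2 + 2 * n%:R ^+ k.+1 * (2 * n%:R - 3)).
Proof.
case: n => [|[|m]] // _.
have natr1 : (m.+1%:R : rat) = m%:R + 1 by rewrite -addn1 natrD.
have natr2 : (m.+2%:R : rat) = m%:R + 2 by rewrite -addn2 natrD.
have natr2B1 : (m.+2%:R - 1 : rat) = m%:R + 1 by rewrite natr2; ring.
have natr_pred : ((m * m.-1)%N%:R : rat) = m%:R * (m%:R - 1).
  by case: m {natr1 natr2 natr2B1} => [|m]; rewrite ?mul0r // natrM /= -addn1 natrD addrK.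
rewrite natr2B1; elim: k => [|k IH].
  by rewrite otriangles1 // -[m.+2.-1]/m.+1 -[m.+2.-2]/m !natrM natr2 natr1; ring.
rewrite otriangles_rec // nonzero_edgesE //= natrD natrD -mulnA [X in _ + X]natrM natr_pred.
by rewrite !natrM IH natrX natr2 natr1 !exprS; ring.
Qed.

Theorem mainTheorem11 (n k : nat) (hn : (2 <= n)%N) (hk : (1 <= k)%N) :
  (T_count n k)%:R =
    (1 / 2 : rat) * ((n%:R - 2) *
      (1 - n%:R / 3 - (n%:R - 1) ^+ k.+1 + (2 / 3) * n%:R ^+ k * (2 * n%:R - 3))).
Proof.
case: k hk => // k _.
have six : (6 * T_count n k.+1)%N = otriangles n k.+1.
  by rewrite /otriangles ordered_trianglesE //; [apply: Hadj_irr | apply: Hadj_sym].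
apply: (@mulfI _ 6%:R) => //.
by rewrite -[LHS]natrM six otrianglesE //; field.
Qed.
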